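(* Let $(K,v)$ be a henselian field and $(K(x)|K,v)$ an immediate extension such that $x$ is a pseudo-limit of a pseudo-Cauchy sequence of transcendental type in $(K,v)$. Then $(K,v)\prec_\exists (K(x),v)^h$ in $\mathcal{L}_{\operatorname{VF}}$.
   Context: An extension is immediate if value group and residue field do not change. A pseudo-Cauchy sequence $(x_\alpha)_{\alpha<\lambda}$ ($\lambda$ a limit ordinal) in $(K,v)$ is a sequence such that $v(x_\gamma-x_\beta)>v(x_\beta-x_\alpha)$ for all sufficiently large $\alpha<\beta<\gamma<\lambda$; $x$ is a pseudo-limit if $v(x-x_\alpha)$ is eventually strictly increasing and equals $v(x_{\alpha+1}-x_\alpha)$ eventually. It is of transcendental type if for every $f\in K[X]$ the sequence $vf(x_\alpha)$ is eventually constant. $(K(x),v)^h$ is a henselization of $(K(x),v)$. $\mathcal{L}_{\operatorname{VF}}=\{+,-,\cdot,{}^{-1},0,1,\mathcal{O}\}$ with $\mathcal{O}(a,b)$ iff $va\ge vb$; $\prec_\exists$ means existentially closed. *)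

(* Valued fields are represented by a field together with a
   (Prop-valued) valuation ring; v a >= v b is the L_VF predicate O(a,b). *)
From HB Require Import structures.
From mathcomp Require Import all_boot all_order all_algebra.
Set Implicit Arguments. Unset Strict Implicit. Unset Printing Implicit Defensive.
Import Order.TTheory GRing.Theory Num.Theory.
Local Open Scope ring_scope.

Section ValuedFields.
Variable F : fieldType.
Variable O : F -> Prop.

Definition valuation_ring : Prop :=
  [/\ O 0, O 1,
      (forall a b, O a -> O b -> O (a + b)) /\
      (forall a, O a -> O (- a)),
      (forall a b, O a -> O b -> O (a * b)) &
      (forall a, a != 0 -> O a \/ O a^-1)].

(* Ov a b  <->  v a >= v b   (the predicate O(a,b) of L_VF) *)
Definition Ov (a b : F) : Prop :=
  (b = 0 /\ a = 0) \/ (b <> 0 /\ O (a / b)).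

Definition veq (a b : F) : Prop := Ov a b /\ Ov b a.
Definition vlt (a b : F) : Prop := Ov b a /\ ~ Ov a b.

Definition in_max (a : F) : Prop := vlt 1 a.

Definition henselian : Prop :=
  forall (p : {poly F}) (a : F),
    p \is monic -> (forall i, O p`_i) -> O a ->
    in_max p.[a] -> ~ in_max (p^`()).[a] ->
    exists b, [/\ O b, p.[b] = 0 & in_max (b - a)].
End ValuedFields.

Definition valued_ext (K L : fieldType) (OK : K -> Prop) (OL : L -> Prop)
  (iota : {rmorphism K -> L}) : Prop :=
  forall a, OK a <-> OL (iota a).

Definition generated_by (K L : fieldType) (iota : {rmorphism K -> L}) (x : L) :=
  forall y : L, exists f g : {poly K},
    (map_poly iota g).[x] != 0 /\ y = (map_poly iota f).[x] / (map_poly iota g).[x].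

(* immediate: same value group and same residue field *)
Definition immediate (K L : fieldType) (OK : K -> Prop) (OL : L -> Prop)
  (iota : {rmorphism K -> L}) : Prop :=
  (forall y : L, y != 0 -> exists a : K, veq OL y (iota a)) /\
  (forall y : L, OL y -> exists a : K, OK a /\ in_max OL (y - iota a)).

(* Index sets: a well-ordered nonempty type with no greatest element, i.e.
   (a type order-isomorphic to) a limit ordinal. *)
Definition limit_index (d : Order.disp_t) (I : orderType d) : Prop :=
  [/\ well_founded (fun a b : I => (a < b)%O),
      inhabited I &
      forall a : I, exists b : I, (a < b)%O].

Definition is_succ (d : Order.disp_t) (I : orderType d) (a b : I) : Prop :=
  (a < b)%O /\ forall c : I, (a < c)%O -> (b <= c)%O.

Section PCS.
Variables (d : Order.disp_t) (I : orderType d).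

Definition pseudo_cauchy (K : fieldType) (OK : K -> Prop) (s : I -> K) : Prop :=
  exists a0 : I, forall a b c : I,
    (a0 <= a)%O -> (a < b)%O -> (b < c)%O -> vlt OK (s b - s a) (s c - s b).

Definition transcendental_type (K : fieldType) (OK : K -> Prop) (s : I -> K) : Prop :=
  forall f : {poly K}, exists a0 : I, forall a : I,
    (a0 <= a)%O -> veq OK f.[s a] f.[s a0].

Definition pseudo_limit (K L : fieldType) (OL : L -> Prop)
  (iota : {rmorphism K -> L}) (s : I -> K) (y : L) : Prop :=
  (exists a0 : I, forall a b : I, (a0 <= a)%O -> (a < b)%O ->
      vlt OL (y - iota (s a)) (y - iota (s b))) /\
  (exists a0 : I, forall a b : I, (a0 <= a)%O -> is_succ a b ->
      veq OL (y - iota (s a)) (iota (s b - s a))).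
End PCS.

Definition henselization (L H : fieldType) (OL : L -> Prop) (OH : H -> Prop)
  (j : {rmorphism L -> H}) : Prop :=
  [/\ valuation_ring OH, henselian OH, valued_ext OL OH j &
      forall (M : fieldType) (OM : M -> Prop) (k : {rmorphism L -> M}),
        valuation_ring OM -> henselian OM -> valued_ext OL OM k ->
        exists h : {rmorphism H -> M},
          [/\ valued_ext OH OM h, (forall y, h (j y) = k y) &
              forall h' : {rmorphism H -> M},
                valued_ext OH OM h' -> (forall y, h' (j y) = k y) ->
                forall z, h' z = h z]].

Inductive vf_term (K : Type) : Type :=
  | TVar of nat
  | TConst of K
  | TZero | TOne
  | TAdd of vf_term K & vf_term K
  | TSub of vf_term K & vf_term K
  | TOpp of vf_term K
  | TMul of vf_term K & vf_term K
  | TInv of vf_term K.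

Inductive vf_qf (K : Type) : Type :=
  | FEq of vf_term K & vf_term K
  | FO of vf_term K & vf_term K
  | FNot of vf_qf K
  | FAnd of vf_qf K & vf_qf K
  | FOr of vf_qf K & vf_qf K.

Section Semantics.
Variables (K : Type) (M : fieldType) (OM : M -> Prop) (c : K -> M) (e : nat -> M).

Fixpoint eval_term (t : vf_term K) : M :=
  match t with
  | TVar n => e n
  | TConst a => c a
  | TZero => 0
  | TOne => 1
  | TAdd t1 t2 => eval_term t1 + eval_term t2
  | TSub t1 t2 => eval_term t1 - eval_term t2
  | TOpp t1 => - eval_term t1
  | TMul t1 t2 => eval_term t1 * eval_term t2
  | TInv t1 => (eval_term t1)^-1   (* 0^-1 = 0 *)
  end.

Fixpoint holds (f : vf_qf K) : Prop :=
  match f with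
  | FEq t1 t2 => eval_term t1 = eval_term t2
  | FO t1 t2 => Ov OM (eval_term t1) (eval_term t2)
  | FNot f1 => ~ holds f1
  | FAnd f1 f2 => holds f1 /\ holds f2
  | FOr f1 f2 => holds f1 \/ holds f2
  end.
End Semantics.

(* (K, OK) ≺∃ (M, OM) in L_VF, where c : K -> M is the embedding:
   every existential formula with parameters in K true in M is true in K. *)
Definition ex_closed (K M : fieldType) (OK : K -> Prop) (OM : M -> Prop)
  (c : K -> M) : Prop :=
  forall phi : vf_qf K,
    (exists e : nat -> M, holds OM c e phi) ->
    (exists e : nat -> K, holds OK id e phi).

(* Choose an ultrafilter [U] on [I] containing every final segment, and let
   [K*] be the ultrapower [K^I/U], valued by [v [f_a] >= v [g_a]] iff this holds
   for [U]-most [a]. By Łoś's theorem [K*] is henselian, and [K] is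
   existentially closed in [K*] along the diagonal embedding.
   Kaplansky's lemma says that, because [s] is of transcendental type and
   [v (x - s_a)] is eventually increasing, [v f(x) = v f(s_a)] for all large [a];
   hence [f(x)/g(x) |-> [f(s_a)/g(s_a)]] is a well-defined valued-field
   embedding of [K(x)] into [K*] over [K]. The universal property of the
   henselization extends it to [(K(x),v)^h], so an existential formula with
   parameters in [K] that holds in [(K(x),v)^h] holds in [K*], hence in [K]. *)

From HB Require Import structures.
From mathcomp Require Import all_boot all_order all_algebra.
From mathcomp Require Import boolp classical_sets filter.
From mathcomp Require Import ring zify.
From Stdlib Require Import Classical ClassicalEpsilon.
Set Implicit Arguments. Unset Strict Implicit. Unset Printing Implicit Defensive.
Import Order.TTheory GRing.Theory.
Local Open Scope ring_scope.

Section ValuationRing.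
Variables (F : fieldType) (O : F -> Prop).
Hypothesis vO : valuation_ring O.

Lemma valring0 : O 0. Proof. by case: vO. Qed.
Lemma valring1 : O 1. Proof. by case: vO. Qed.
Lemma valringD a b : O a -> O b -> O (a + b).
Proof. by case: vO => _ _ [+ _] _ _; apply. Qed.
Lemma valringN a : O a -> O (- a).
Proof. by case: vO => _ _ [_ +] _ _; apply. Qed.
Lemma valringM a b : O a -> O b -> O (a * b).
Proof. by case: vO => _ _ _ + _; apply. Qed.
Lemma valringV a : a != 0 -> O a \/ O a^-1.
Proof. by case: vO => _ _ _ _; apply. Qed.
Lemma valringNE a : O (- a) <-> O a.
Proof. by split=> h; [rewrite -(opprK a)|]; apply: valringN. Qed.

Local Notation Ov := (Ov O).
Local Notation veq := (veq O).
Local Notation vlt := (vlt O).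

Lemma Ov0r a : Ov a 0 <-> a = 0.
Proof. by split=> [[[_ ->]|[]]|->]; [|by []|left]. Qed.

Lemma Ov0l b : Ov 0 b.
Proof.
have [->|nb] := eqVneq b 0; first by left.
by right; split; [apply/eqP|rewrite mul0r; exact: valring0].
Qed.

Lemma OvE a b : b != 0 -> (Ov a b <-> O (a / b)).
Proof.
move=> nb; split=> [[[/eqP]|[]]|h]; first by rewrite (negbTE nb).
  by [].
by right; split=> //; apply/eqP.
Qed.

Lemma Ov_refl a : Ov a a.
Proof.
have [->|na] := eqVneq a 0; first exact: Ov0l.
by apply/OvE => //; rewrite divff //; exact: valring1.
Qed.

Lemma Ov_trans a b c : Ov a b -> Ov b c -> Ov a c.
Proof.
have [->|nc] := eqVneq c 0.
  by move=> h /Ov0r eb; move: h; rewrite eb => /Ov0r ->; exact: Ov0l.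
have [eb|nb] := eqVneq b 0.
  by move=> h1 _; move: h1; rewrite eb => /Ov0r ->; exact: Ov0l.
move=> /(OvE _ nb) h1 /(OvE _ nc) h2; apply/OvE => //.
have -> : a / c = (a / b) * (b / c) by rewrite mulrA divfK.
exact: valringM.
Qed.

Lemma Ov_total a b : Ov a b \/ Ov b a.
Proof.
have [->|nb] := eqVneq b 0; first by right; exact: Ov0l.
have [->|na] := eqVneq a 0; first by left; exact: Ov0l.
have nab : a / b != 0 by rewrite mulf_neq0 // invr_eq0.
case: (valringV nab) => h; first by left; apply/OvE.
by right; apply/OvE => //; rewrite invf_div in h.
Qed.

Lemma OvD a b c : Ov a c -> Ov b c -> Ov (a + b) c.
Proof.
have [->|nc] := eqVneq c 0.
  by move=> /Ov0r -> /Ov0r ->; rewrite addr0; exact: Ov0l.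
move=> /(OvE _ nc) h1 /(OvE _ nc) h2; apply/OvE => //.
by rewrite mulrDl; exact: valringD.
Qed.

Lemma OvNl a b : Ov (- a) b <-> Ov a b.
Proof.
have [->|nb] := eqVneq b 0; last by rewrite !(OvE _ nb) mulNr valringNE.
by rewrite !Ov0r; split=> [/eqP|->]; [rewrite oppr_eq0 => /eqP|rewrite oppr0].
Qed.

Lemma OvNr a b : Ov a (- b) <-> Ov a b.
Proof.
have [->|nb] := eqVneq b 0; first by rewrite oppr0.
have nb' : - b != 0 by rewrite oppr_eq0.
by rewrite (OvE _ nb) (OvE _ nb') invrN mulrN valringNE.
Qed.

Lemma OvM a b c e : Ov a b -> Ov c e -> Ov (a * c) (b * e).
Proof.
have [->|nb] := eqVneq b 0.
  by move=> /Ov0r -> _; rewrite mul0r; exact: Ov0l.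
have [->|ne] := eqVneq e 0.
  by move=> _ /Ov0r ->; rewrite mulr0; exact: Ov0l.
move=> /(OvE _ nb) h1 /(OvE _ ne) h2; apply/OvE; first by rewrite mulf_neq0.
have -> : a * c / (b * e) = (a / b) * (c / e) by rewrite invfM; ring.
exact: valringM.
Qed.

Lemma OvMr2 a b c : c != 0 -> Ov (a * c) (b * c) -> Ov a b.
Proof.
move=> nc; have [->|nb] := eqVneq b 0.
  by rewrite mul0r => /Ov0r/eqP; rewrite mulf_eq0 (negbTE nc) orbF => /eqP ->; exact: Ov0l.
rewrite (OvE _ (mulf_neq0 nb nc)) (OvE _ nb).
by rewrite invfM mulrACA divff // mulr1.
Qed.

Lemma veq_refl a : veq a a. Proof. by split; apply: Ov_refl. Qed.
Lemma veq_sym a b : veq a b -> veq b a. Proof. by case. Qed.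
Lemma veq_trans a b c : veq a b -> veq b c -> veq a c.
Proof. by move=> [h1 h2] [h3 h4]; split; apply: Ov_trans; eassumption. Qed.

Lemma veqN a : veq (- a) a.
Proof. by split; [apply/OvNl|apply/OvNr]; exact: Ov_refl. Qed.

Lemma veqM a b c e : veq a b -> veq c e -> veq (a * c) (b * e).
Proof. by move=> [h1 h2] [h3 h4]; split; apply: OvM. Qed.

Lemma veq_eq0 a b : veq a b -> a = 0 -> b = 0.
Proof. by move=> [_ h] ea; move: h; rewrite ea => /Ov0r. Qed.

Lemma Ov_veq a b a' b' : veq a a' -> veq b b' -> Ov a b -> Ov a' b'.
Proof. by move=> [_ h1] [h2 _] h; apply: Ov_trans h1 (Ov_trans h h2). Qed.

Lemma vlt_nOv a b : ~ Ov a b -> vlt a b.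
Proof. by move=> h; split=> //; case: (Ov_total a b). Qed.

Lemma vlt_Ov_trans a b c : vlt a b -> Ov c b -> vlt a c.
Proof.
move=> [h1 h2] h3; split; first exact: Ov_trans h3 h1.
by move=> h4; apply: h2; exact: Ov_trans h4 h3.
Qed.

Lemma Ov_vlt_trans a b c : Ov b a -> vlt b c -> vlt a c.
Proof.
move=> h1 [h2 h3]; split; first exact: Ov_trans h2 h1.
by move=> h4; apply: h3; exact: Ov_trans h1 h4.
Qed.

Lemma vlt_veq a b a' b' : veq a a' -> veq b b' -> vlt a b -> vlt a' b'.
Proof. by move=> [e1 _] [_ e4] h; apply: vlt_Ov_trans e4; exact: Ov_vlt_trans e1 h. Qed.

Lemma vlt_irr a : ~ vlt a a. Proof. by case. Qed.

Lemma vlt_neq0 a b : vlt a b -> a != 0.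
Proof. by move=> [_ h]; apply/eqP => ea; apply: h; rewrite ea; exact: Ov0l. Qed.

Lemma vlt_veqDr a b : vlt a b -> veq (a + b) a.
Proof.
move=> [h1 h2]; split; first exact: OvD (Ov_refl a) h1.
have ea : a = (a + b) + - b by rewrite addrK.
case: (Ov_total (a + b) b) => h4.
  by exfalso; apply: h2; rewrite {1}ea; apply: OvD h4 _; apply/OvNl/Ov_refl.
by rewrite {1}ea; apply: OvD (Ov_refl _) _; apply/OvNl.
Qed.

Lemma vlt_veqDl a b : vlt a b -> veq (b + a) a.
Proof. by rewrite addrC; apply: vlt_veqDr. Qed.

Lemma vlt_mul a b c e : vlt a b -> Ov e c -> c != 0 -> vlt (a * c) (b * e).
Proof.
move=> [h1 h2] h3 nc; split; first exact: OvM.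
move=> h4; apply: h2; apply: (OvMr2 nc).
by apply: Ov_trans h4 _; apply: OvM => //; exact: Ov_refl.
Qed.

Lemma vlt_mulr a b c : vlt a b -> c != 0 -> vlt (a * c) (b * c).
Proof. by move=> h nc; apply: vlt_mul => //; exact: Ov_refl. Qed.

Lemma vlt_exp a b n : vlt a b -> vlt (a ^+ n.+1) (b ^+ n.+1).
Proof.
move=> h; elim: n => [|n IH]; first by rewrite !expr1.
rewrite exprS (exprS b); apply: vlt_mul => //; first by case: IH.
exact: vlt_neq0 IH.
Qed.

End ValuationRing.

Section ValuedExtension.
Variables (K L : fieldType) (OK : K -> Prop) (OL : L -> Prop) (f : {rmorphism K -> L}).
Hypothesis ve : valued_ext OK OL f.

Lemma Ov_map a b : Ov OK a b <-> Ov OL (f a) (f b).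
Proof.
rewrite /Ov -(rmorph0 f); split.
  case=> [[-> ->]|[nb h]]; first by left.
  right; split; first by move/fmorph_inj.
  by rewrite -fmorphV -rmorphM; apply/ve.
case=> [[/fmorph_inj -> /fmorph_inj ->]|[nb h]]; first by left.
right; split; first by move=> eb; apply: nb; rewrite eb.
by apply/ve; rewrite rmorphM fmorphV.
Qed.

Lemma veq_map a b : veq OK a b <-> veq OL (f a) (f b).
Proof. by rewrite /veq !Ov_map. Qed.

End ValuedExtension.

Section Ultimately.
Variables (d : Order.disp_t) (I : orderType d).

Definition ultimately (P : I -> Prop) := exists a0 : I, forall a, (a0 <= a)%O -> P a.

Lemma ultimately_and P Q :
  ultimately P -> ultimately Q -> ultimately (fun a => P a /\ Q a).
Proof.
move=> [a0 h0] [a1 h1]; exists (Order.max a0 a1) => a.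
by rewrite ge_max => /andP[/h0 ? /h1 ?].
Qed.

Lemma ultimately_mono (P Q : I -> Prop) :
  (forall a, P a -> Q a) -> ultimately P -> ultimately Q.
Proof. by move=> PQ [a0 h]; exists a0 => a /h /PQ. Qed.

End Ultimately.

Section Kaplansky.
Variables (K L : fieldType) (OL : L -> Prop) (iota : {rmorphism K -> L}).
Hypothesis vL : valuation_ring OL.
Variables (d : Order.disp_t) (I : orderType d) (y : I -> L) (x : L).
Hypothesis no_max : forall a : I, exists b, (a < b)%O.
Hypothesis y_transcendental : forall f : {poly K}, exists a0, forall a, (a0 <= a)%O ->
  veq OL (map_poly iota f).[y a] (map_poly iota f).[y a0].
Hypothesis x_limit : exists a1, forall a b, (a1 <= a)%O -> (a < b)%O ->
  vlt OL (x - y a) (x - y b).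

Local Notation Ov := (Ov OL).
Local Notation veq := (veq OL).
Local Notation vlt := (vlt OL).
Local Notation ultimately := (@ultimately d I).

Definition vincreasing (T : I -> L) :=
  ultimately (fun a => forall b, (a < b)%O -> vlt (T a) (T b)).

Lemma vincr_veq (T T' : I -> L) :
  ultimately (fun a => veq (T a) (T' a)) -> vincreasing T' -> vincreasing T.
Proof.
move=> [a0 h0] [a1 h1]; exists (Order.max a0 a1) => a.
rewrite ge_max => /andP[ha0 ha1] b hb.
have hb0 : (a0 <= b)%O by apply: le_trans ha0 (ltW hb).
exact: (vlt_veq vL (veq_sym (h0 a ha0)) (veq_sym (h0 b hb0)) (h1 a ha1 b hb)).
Qed.

Lemma vincr_not_const (T : I -> L) c :
  ultimately (fun a => veq (T a) c) -> ~ vincreasing T.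
Proof.
move=> [a0 h0] [a1 h1]; set a := Order.max a0 a1.
have [b hab] := no_max a.
have ha0 : (a0 <= a)%O by rewrite le_max lexx.
have ha1 : (a1 <= a)%O by rewrite le_max lexx orbT.
have hb0 : (a0 <= b)%O by apply: le_trans ha0 (ltW hab).
exact: vlt_irr (vlt_veq vL (h0 a ha0) (h0 b hb0) (h1 a ha1 b hab)).
Qed.

Lemma vincr_dichotomy (T : I -> L) c : vincreasing T ->
  ultimately (fun a => vlt c (T a)) \/ ultimately (fun a => vlt (T a) c).
Proof.
move=> [a1 h1].
case: (classic (exists a2, (a1 <= a2)%O /\ Ov (T a2) c)) => [[a2 [ha2 hc]]|hno].
  left; have [a3 h3] := no_max a2; exists a3 => a ha.
  exact: (Ov_vlt_trans vL hc (h1 a2 ha2 a (lt_le_trans h3 ha))).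
by right; exists a1 => a ha; apply: (vlt_nOv vL) => hc; apply: hno; exists a.
Qed.

(* Otherwise [v (u - w a)] would ultimately be [min (v u) (v c)]. *)
Lemma veq_of_vincr_sub (u c : L) (w : I -> L) :
  ultimately (fun a => veq (w a) c) -> vincreasing (fun a => u - w a) -> veq u c.
Proof.
move=> wc incr; have wNc a : veq (w a) c -> veq (- w a) c.
  by move=> h; apply: (veq_trans vL (veqN vL _) h).
split; apply: NNPP => /(vlt_nOv vL) h; apply: (vincr_not_const _ incr).
  by apply: ultimately_mono wc => a /wNc /veq_sym wac; apply: (vlt_veqDr vL);
     apply: (vlt_veq vL (veq_refl vL _) wac h).
apply: ultimately_mono wc => a /wNc wac; rewrite addrC.
apply: (veq_trans vL _ wac); apply: (vlt_veqDr vL).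
exact: (vlt_veq vL (veq_sym wac) (veq_refl vL _) h).
Qed.

Lemma ultimately_horner_value (g : {poly K}) :
  ultimately (fun a => (map_poly iota g).[y a] = 0) \/
  exists2 c, c != 0 & ultimately (fun a => veq (map_poly iota g).[y a] c).
Proof.
have [a0 h] := y_transcendental g.
have [e|ne] := eqVneq (map_poly iota g).[y a0] 0.
  by left; exists a0 => a /h /veq_sym; rewrite e => /veq_eq0; apply.
by right; exists (map_poly iota g).[y a0]; last exists a0.
Qed.

Definition delta a := x - y a.

Lemma delta_vincr : vincreasing delta.
Proof. by have [a1 h] := x_limit; exists a1 => a ha b hb; apply: h. Qed.

Lemma ultimately_delta_neq0 : ultimately (fun a => delta a != 0).
Proof.
have [a1 h] := delta_vincr; exists a1 => a ha.
by have [b hb] := no_max a; exact: (vlt_neq0 vL (h a ha b hb)).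
Qed.

Lemma scaled_delta_vincr (c : L) k : c != 0 -> vincreasing (fun a => c * delta a ^+ k.+1).
Proof.
move=> nc; have [a1 h] := delta_vincr; exists a1 => a ha b hb.
by rewrite ![c * _]mulrC; apply: (vlt_mulr vL) => //; apply: (vlt_exp vL) => //; exact: h.
Qed.

Section TaylorTerms.
Variable f : {poly K}.

Definition hasse i := map_poly iota (f^`N(i)).
Definition taylor_term i a := (hasse i).[y a] * delta a ^+ i.
Definition taylor_sum (l : seq nat) a := \sum_(i <- l) taylor_term i a.

Lemma taylor_expansion a :
  (map_poly iota f).[x] = (map_poly iota f).[y a] + taylor_sum (index_iota 1 (size f).+1) a.
Proof.
have -> : x = y a + delta a by rewrite /delta addrC subrK.
rewrite (@nderiv_taylor_wide _ (size f).+1); last 2 first.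
- exact: mulrC.
- by rewrite size_map_poly.
rewrite -(big_mkord xpredT (fun i => (map_poly iota f)^`N(i).[y a] * delta a ^+ i)).
rewrite big_ltn // expr0 mulr1 nderivn0; congr (_ + _).
by apply: eq_bigr => i _; rewrite /taylor_term /hasse nderivn_map.
Qed.

Lemma taylor_term_vincr i c : c != 0 ->
  ultimately (fun a => veq (hasse i.+1).[y a] c) -> vincreasing (taylor_term i.+1).
Proof.
move=> nc hc; apply: (vincr_veq _ (scaled_delta_vincr i nc)).
by apply: ultimately_mono hc => a h; apply: (veqM vL h (veq_refl vL _)).
Qed.

(* [taylor_term j / taylor_term i] has the value of [cj / ci * delta ^+ (j - i)],
   which is increasing. *)
Lemma taylor_terms_separate i j ci cj : (i < j)%N -> ci != 0 -> cj != 0 ->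
  ultimately (fun a => veq (hasse i).[y a] ci) ->
  ultimately (fun a => veq (hasse j).[y a] cj) ->
  ultimately (fun a => vlt (taylor_term i a) (taylor_term j a)) \/
  ultimately (fun a => vlt (taylor_term j a) (taylor_term i a)).
Proof.
move=> ij nci ncj hi hj; set k := (j - i).-1.
have eD a : delta a ^+ j = delta a ^+ k.+1 * delta a ^+ i.
  by rewrite -exprD; congr (_ ^+ _); rewrite /k; lia.
pose E a := cj * delta a ^+ k.+1.
have Ti : ultimately (fun a => veq (taylor_term i a) (ci * delta a ^+ i)).
  by apply: ultimately_mono hi => a h; apply: (veqM vL h (veq_refl vL _)).
have Tj : ultimately (fun a => veq (taylor_term j a) (E a * delta a ^+ i)).
  apply: ultimately_mono hj => a h; rewrite /taylor_term eD mulrA.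
  by apply: (veqM vL (veqM vL h (veq_refl vL _)) (veq_refl vL _)).
have TiTj := ultimately_and (ultimately_and Ti Tj) ultimately_delta_neq0.
by case: (vincr_dichotomy ci (scaled_delta_vincr k ncj)) => hE; [left|right];
  apply: ultimately_mono (ultimately_and TiTj hE) => a [[[ei ej] nD] h];
  [apply: (vlt_veq vL (veq_sym ei) (veq_sym ej) _)
  |apply: (vlt_veq vL (veq_sym ej) (veq_sym ei) _)];
  apply: (vlt_mulr vL) => //; exact: expf_neq0.
Qed.

Lemma taylor_terms_separate_neq i j ci cj : i != j -> ci != 0 -> cj != 0 ->
  ultimately (fun a => veq (hasse i).[y a] ci) ->
  ultimately (fun a => veq (hasse j).[y a] cj) ->
  ultimately (fun a => vlt (taylor_term i a) (taylor_term j a)) \/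
  ultimately (fun a => vlt (taylor_term j a) (taylor_term i a)).
Proof.
move=> nij nci ncj hi hj; case: (ltngtP i j) => ij.
- exact: (taylor_terms_separate ij nci ncj hi hj).
- by case: (taylor_terms_separate ij ncj nci hj hi) => h; [right|left].
- by rewrite ij eqxx in nij.
Qed.

Lemma taylor_sum_dominant (l : seq nat) : uniq l ->
  ultimately (fun a => taylor_sum l a = 0) \/
  exists2 h, h \in l & (exists2 ch, ch != 0 & ultimately (fun a => veq (hasse h).[y a] ch)) /\
    ultimately (fun a => veq (taylor_sum l a) (taylor_term h a)).
Proof.
elim: l => [|i l IH] /=.
  by move=> _; left; have [a1 _] := x_limit; exists a1 => a _; rewrite /taylor_sum big_nil.
move=> /andP[il ul].
have eS a : taylor_sum (i :: l) a = taylor_term i a + taylor_sum l a.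
  by rewrite /taylor_sum big_cons.
have inl h : h \in l -> h \in i :: l by rewrite inE => ->; rewrite orbT.
case: (ultimately_horner_value (f^`N(i))) => [h0|[ci nci hci]].
  have e0 : ultimately (fun a => taylor_sum (i :: l) a = taylor_sum l a).
    by apply: ultimately_mono h0 => a h; rewrite eS /taylor_term /hasse h mul0r add0r.
  case: (IH ul) => [hl|[h hl [hc hs]]]; [left|right].
    by apply: ultimately_mono (ultimately_and e0 hl) => a [-> ->].
  exists h; first exact: inl.
  by split=> //; apply: ultimately_mono (ultimately_and e0 hs) => a [->].
have hd : (exists2 ch, ch != 0 & ultimately (fun a => veq (hasse i).[y a] ch)) by exists ci.
case: (IH ul) => [hl|[h hl [[ch nch hch] hs]]]; right.
  exists i; first exact: mem_head.
  by split=> //; apply: ultimately_mono hl => a h; rewrite eS h addr0; exact: veq_refl.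
have nih : i != h by apply: contraNneq il => ->.
case: (taylor_terms_separate_neq nih nci nch hci hch) => hv.
  exists i; first exact: mem_head.
  split=> //; apply: ultimately_mono (ultimately_and hv hs) => a [h1 [h2 _]].
  by rewrite eS; apply: (vlt_veqDr vL); exact: (vlt_Ov_trans vL h1 h2).
exists h; first exact: inl.
split; first by exists ch.
apply: ultimately_mono (ultimately_and hv hs) => a [h1 h2]; rewrite eS.
apply: (veq_trans vL _ h2); apply: (vlt_veqDl vL).
exact: (vlt_veq vL (veq_sym h2) (veq_refl vL _) h1).
Qed.

End TaylorTerms.

Lemma kaplansky_value (f : {poly K}) :
  ultimately (fun a => veq (map_poly iota f).[x] (map_poly iota f).[y a]).
Proof.
set g := map_poly iota f.
have [a0 h0] := y_transcendental f; rewrite -/g in h0.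
have ult_beta : ultimately (fun a => veq g.[y a] g.[y a0]) by exists a0.
suff hb : veq g.[x] g.[y a0].
  by apply: ultimately_mono ult_beta => a h; apply: (veq_trans vL hb (veq_sym h)).
have eS a : g.[x] - g.[y a] = taylor_sum f (index_iota 1 (size f).+1) a.
  by rewrite (taylor_expansion f a) addrAC subrr add0r.
have ul : uniq (index_iota 1 (size f).+1) by apply: iota_uniq.
case: (taylor_sum_dominant f ul) => [hz|[h hl [[ch nch hch] hs]]].
  have [a1 h1] := ultimately_and ult_beta hz.
  have [ha1 hz1] := h1 a1 (lexx _).
  suff -> : g.[x] = g.[y a1] by [].
  by apply/eqP; rewrite -subr_eq0 eS hz1.
have dom : vincreasing (taylor_term f h).
  move: hl; rewrite mem_index_iota; case: h hch {hs} => // h hch _.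
  exact: taylor_term_vincr nch hch.
apply: (veq_of_vincr_sub ult_beta); apply: (vincr_veq _ dom).
by apply: ultimately_mono hs => a; rewrite eS.
Qed.

End Kaplansky.

Record ultrafilter (I : Type) (U : (I -> Prop) -> Prop) : Prop := {
  ultraT : U (fun _ => True);
  ultraI : forall P Q, U P -> U Q -> U (fun a => P a /\ Q a);
  ultraS : forall P Q : I -> Prop, (forall a, P a -> Q a) -> U P -> U Q;
  ultraNF : ~ U (fun _ => False);
  ultraC : forall P, U P \/ U (fun a => ~ P a) }.

Lemma ultrafilter_extend (I : Type) (F : (I -> Prop) -> Prop) :
  F (fun _ => True) ->
  (forall P Q, F P -> F Q -> F (fun a => P a /\ Q a)) ->
  (forall P Q : I -> Prop, (forall a, P a -> Q a) -> F P -> F Q) ->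
  ~ F (fun _ => False) ->
  exists2 U, ultrafilter U & forall P, F P -> U P.
Proof.
move=> FT FI FS FN.
have PF : ProperFilter (F : set_system I).
  apply: Build_ProperFilter_ex.
    move=> P FP; apply: NNPP => nP; apply: FN; apply: FS FP => a Pa.
    by apply: nP; exists a.
  split.
  - by apply: FS FT.
  - by move=> P Q FP FQ; apply: FS (FI P Q FP FQ) => a [].
  - by move=> P Q PQ; apply: FS.
have [G [UG FG]] := ultraFilterLemma PF.
exists G => //.
have GF : Filter G by apply: filter_filter.
split.
- exact: filterT.
- by move=> P Q GP GQ; apply: filterS (filterI GP GQ) => a [].
- by move=> P Q PQ; apply: filterS.
- have PG : ProperFilter G by exact: ultra_proper.
  exact: (@filter_not_empty _ G PG).
- by move=> P; have := in_ultra_setVsetC P UG.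
Qed.

Section UltrafilterLogic.
Variables (I : Type) (U : (I -> Prop) -> Prop).
Hypothesis UU : ultrafilter U.

Lemma ultraW (P : I -> Prop) : (forall a, P a) -> U P.
Proof. by move=> h; apply: (ultraS UU _ (ultraT UU)). Qed.

Lemma ultra_and (P Q : I -> Prop) : U (fun a => P a /\ Q a) <-> U P /\ U Q.
Proof.
split; last by case; apply: (ultraI UU).
by move=> h; split; apply: (ultraS UU _ h) => a [].
Qed.

Lemma ultra_or (P Q : I -> Prop) : U (fun a => P a \/ Q a) <-> U P \/ U Q.
Proof.
split; last by case; apply: (ultraS UU) => a; [left|right].
move=> h; case: (ultraC UU P) => hP; first by left.
by right; apply: (ultraS UU _ (ultraI UU h hP)) => a [[]].
Qed.

Lemma ultra_not (P : I -> Prop) : U (fun a => ~ P a) <-> ~ U P.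
Proof.
split; last by case: (ultraC UU P).
move=> h1 h2; apply: (ultraNF UU); apply: (ultraS UU _ (ultraI UU h1 h2)).
by move=> a [].
Qed.

Lemma ultra_all m (P : nat -> I -> Prop) : (forall i, (i < m)%N -> U (P i)) ->
  U (fun b => forall i, (i < m)%N -> P i b).
Proof.
elim: m => [|m IH] h; first exact: ultraW.
have h1 := IH (fun i hi => h i (ltnW hi)).
apply: (ultraS UU _ (ultraI UU h1 (h m (ltnSn m)))) => b [H1 H2] i.
by rewrite ltnS leq_eqVlt => /orP[/eqP -> //|]; exact: H1.
Qed.

End UltrafilterLogic.

Section Ultrapower.
Variables (K : fieldType) (I : Type) (U : (I -> Prop) -> Prop).
Hypothesis UU : ultrafilter U.

Definition ae_eq (f g : I -> K) := U (fun a => f a = g a).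

Lemma ae_eq_refl f : ae_eq f f.
Proof. exact: (ultraW UU). Qed.
Lemma ae_eq_sym f g : ae_eq f g -> ae_eq g f.
Proof. by apply: (ultraS UU) => a ->. Qed.
Lemma ae_eq_trans f g h : ae_eq f g -> ae_eq g h -> ae_eq f h.
Proof. by move=> fg gh; apply: (ultraS UU _ (ultraI UU fg gh)) => a [-> ->]. Qed.

Lemma ae_eq_app (f g : I -> K) (h : K -> K) :
  ae_eq f g -> ae_eq (fun a => h (f a)) (fun a => h (g a)).
Proof. by apply: (ultraS UU) => a ->. Qed.
Lemma ae_eq_app2 (f g f' g' : I -> K) (h : K -> K -> K) : ae_eq f g -> ae_eq f' g' ->
  ae_eq (fun a => h (f a) (f' a)) (fun a => h (g a) (g' a)).
Proof. by move=> e e'; apply: (ultraS UU _ (ultraI UU e e')) => a [-> ->]. Qed.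

Lemma ultra_congr (f g : I -> K) (P : K -> Prop) : ae_eq f g ->
  (U (fun a => P (f a)) <-> U (fun a => P (g a))).
Proof.
by move=> e; split=> h; apply: (ultraS UU _ (ultraI UU e h)) => a [->].
Qed.

Lemma ultra_congr2 (f g f' g' : I -> K) (P : K -> K -> Prop) :
  ae_eq f g -> ae_eq f' g' ->
  (U (fun a => P (f a) (f' a)) <-> U (fun a => P (g a) (g' a))).
Proof.
move=> e e'; split=> h; apply: (ultraS UU _ (ultraI UU (ultraI UU e e') h)).
  by move=> a [[<- <-]].
by move=> a [[-> ->]].
Qed.

(* Each [ae_eq]-class gets a representative chosen by [epsilon], so that the
   ultrapower can be built as a subtype rather than a quotient. *)
Definition canon (f : I -> K) : I -> K :=
  epsilon (inhabits (fun _ : I => (0 : K))) (ae_eq f).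

Lemma ae_eq_canon f : ae_eq f (canon f).
Proof. by apply: epsilon_spec; exists f; exact: ae_eq_refl. Qed.

Lemma canon_ae f g : ae_eq f g -> canon f = canon g.
Proof.
move=> fg; rewrite /canon; congr epsilon; apply: funext => h; apply: propext.
by split=> fh; [apply: ae_eq_trans (ae_eq_sym fg) fh|apply: ae_eq_trans fg fh].
Qed.

Lemma canon_idem f : canon (canon f) = canon f.
Proof. by apply: canon_ae; apply: ae_eq_sym; apply: ae_eq_canon. Qed.

Record ucarrier := UCarrier { rep : I -> K; repP : canon rep = rep }.

Definition ucls f := UCarrier (canon_idem f).

Lemma rep_inj z w : rep z = rep w -> z = w.
Proof.
case: z => z zP; case: w => w wP /= zw; subst w.
by rewrite (Prop_irrelevance zP wP).
Qed.

Lemma repK z : ucls (rep z) = z.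
Proof. by apply: rep_inj; rewrite /= repP. Qed.

Lemma ucls_ae f g : ae_eq f g -> ucls f = ucls g.
Proof. by move=> fg; apply: rep_inj => /=; apply: canon_ae. Qed.

Lemma rep_ucls f : ae_eq (rep (ucls f)) f.
Proof. exact: ae_eq_sym (ae_eq_canon f). Qed.

Lemma ult_eqE z w : z = w <-> ae_eq (rep z) (rep w).
Proof.
split=> [-> | h]; first exact: ae_eq_refl.
by rewrite -(repK z) -(repK w); apply: ucls_ae.
Qed.

(* The carrier mentions [UU] because the field axioms only hold for an
   ultrafilter, so that the field structure below can be canonical. *)
Definition ultrapower (_ : ultrafilter U) := ucarrier.
Local Notation T := (ultrapower UU).
HB.instance Definition _ := gen_eqMixin T.
HB.instance Definition _ := gen_choiceMixin T.

Definition uzero : T := ucls (fun _ => 0).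
Definition uone : T := ucls (fun _ => 1).
Definition uopp (z : T) : T := ucls (fun a => - rep z a).
Definition uadd (z w : T) : T := ucls (fun a => rep z a + rep w a).
Definition umul (z w : T) : T := ucls (fun a => rep z a * rep w a).
Definition uinv (z : T) : T := ucls (fun a => (rep z a)^-1).

(* Reduces an equation between ultrapower expressions to the pointwise
   equation on a set in [U], with all representatives substituted. *)
Ltac usolve := apply/ult_eqE; rewrite ?/uadd ?/umul ?/uopp ?/uinv ?/uzero ?/uone;
  repeat match goal with
  | |- context [rep (ucls ?f)] =>
     lazymatch goal with
     | _ : ae_eq (rep (ucls f)) f |- _ => fail
     | _ => have := rep_ucls f; move=> ?
     end
  end;
  unfold ae_eq in *;
  repeat match goal with
  | H1 : U _, H2 : U _ |- _ => have := ultraI UU H1 H2; clear H1 H2; move=> ?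
  end;
  match goal with H : U _ |- U _ => apply: (ultraS UU _ H) => a; clear H end;
  move=> ?;
  repeat match goal with
  | H : _ /\ _ |- _ => case: H => ? ?
  | H : rep _ _ = _ |- _ => (rewrite -> H in * ); clear H
  end.

Lemma uaddA : associative uadd.
Proof. by move=> x y z; usolve; rewrite addrA. Qed.
Lemma uaddC : commutative uadd.
Proof. by move=> x y; usolve; rewrite addrC. Qed.
Lemma uadd0 : left_id uzero uadd.
Proof. by move=> x; usolve; rewrite add0r. Qed.
Lemma uaddN : left_inverse uzero uopp uadd.
Proof. by move=> x; usolve; rewrite addNr. Qed.

HB.instance Definition _ := GRing.isZmodule.Build T uaddA uaddC uadd0 uaddN.

Lemma umulA : associative umul.
Proof. by move=> x y z; usolve; rewrite mulrA. Qed.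
Lemma umulC : commutative umul.
Proof. by move=> x y; usolve; rewrite mulrC. Qed.
Lemma umul1 : left_id uone umul.
Proof. by move=> x; usolve; rewrite mul1r. Qed.
Lemma umulD : left_distributive umul uadd.
Proof. by move=> x y z; usolve; rewrite mulrDl. Qed.
Lemma uone_neq0 : uone != uzero.
Proof.
apply/negP => /eqP /ult_eqE; rewrite /uone /uzero => h.
apply: (ultraNF UU).
have := ultraI UU (ultraI UU h (rep_ucls (fun _ => 1))) (rep_ucls (fun _ => 0)).
by apply: (ultraS UU) => a [[-> ->] /eqP]; rewrite oner_eq0.
Qed.

HB.instance Definition _ :=
  GRing.Zmodule_isComNzRing.Build T umulA umulC umul1 umulD uone_neq0.

Lemma ult_neq0 (z : T) : z != 0 -> U (fun a => rep z a != 0).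
Proof.
move=> nz; case: (ultraC UU (fun a => rep z a != 0)) => // h; exfalso.
move/eqP: nz; apply; apply/ult_eqE.
apply: (ultraS UU _ (ultraI UU h (rep_ucls (fun _ => 0)))).
by move=> a [/negP/negbNE/eqP -> ->].
Qed.

Lemma umulV (z : T) : z != 0 -> uinv z * z = 1.
Proof.
move=> /ult_neq0 nz; change (umul (uinv z) z = uone); usolve.
by rewrite mulVf.
Qed.

Lemma uinv0 : uinv 0 = 0.
Proof. by change (uinv uzero = uzero); usolve; rewrite invr0. Qed.

HB.instance Definition _ := GRing.ComNzRing_isField.Build T umulV uinv0.

Lemma rep0 : ae_eq (rep (0 : T)) (fun _ => 0). Proof. exact: rep_ucls. Qed.
Lemma rep1 : ae_eq (rep (1 : T)) (fun _ => 1). Proof. exact: rep_ucls. Qed.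
Lemma repD (z w : T) : ae_eq (rep (z + w)) (fun a => rep z a + rep w a).
Proof. exact: rep_ucls. Qed.
Lemma repN (z : T) : ae_eq (rep (- z)) (fun a => - rep z a).
Proof. exact: rep_ucls. Qed.
Lemma repM (z w : T) : ae_eq (rep (z * w)) (fun a => rep z a * rep w a).
Proof. exact: rep_ucls. Qed.
Lemma repV (z : T) : ae_eq (rep z^-1) (fun a => (rep z a)^-1).
Proof. exact: rep_ucls. Qed.

Lemma repB (z w : T) : ae_eq (rep (z - w)) (fun a => rep z a - rep w a).
Proof.
apply: ae_eq_trans (repD _ _) _.
exact: ae_eq_app2 (fun u v => u + v) (ae_eq_refl _) (repN _).
Qed.

Lemma repdiv (z w : T) : ae_eq (rep (z / w)) (fun a => rep z a / rep w a).
Proof.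
apply: ae_eq_trans (repM _ _) _.
exact: ae_eq_app2 (fun u v => u * v) (ae_eq_refl _) (repV _).
Qed.

Lemma rep_sum m (F : nat -> T) :
  ae_eq (rep (\sum_(i < m) F i)) (fun b => \sum_(i < m) rep (F i) b).
Proof.
elim: m => [|m IH].
  by rewrite big_ord0; apply: ae_eq_trans rep0 _; apply: (ultraW UU) => b; rewrite big_ord0.
rewrite big_ord_recr; apply: ae_eq_trans (repD _ _) _.
apply: ae_eq_trans (ae_eq_app2 (fun u v => u + v) IH (ae_eq_refl _)) _.
by apply: (ultraW UU) => b; rewrite big_ord_recr.
Qed.

Lemma rep_exp (z : T) k : ae_eq (rep (z ^+ k)) (fun b => rep z b ^+ k).
Proof.
elim: k => [|k IH].
  by rewrite expr0; apply: ae_eq_trans rep1 _; apply: (ultraW UU) => b; rewrite expr0.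
rewrite exprS; apply: ae_eq_trans (repM _ _) _.
apply: ae_eq_trans (ae_eq_app2 (fun u v => u * v) (ae_eq_refl _) IH) _.
by apply: (ultraW UU) => b; rewrite exprS.
Qed.

Lemma rep_natmul (z : T) k : ae_eq (rep (z *+ k)) (fun b => rep z b *+ k).
Proof.
elim: k => [|k IH].
  by rewrite mulr0n; apply: ae_eq_trans rep0 _; apply: (ultraW UU) => b; rewrite mulr0n.
rewrite mulrS; apply: ae_eq_trans (repD _ _) _.
apply: ae_eq_trans (ae_eq_app2 (fun u v => u + v) (ae_eq_refl _) IH) _.
by apply: (ultraW UU) => b; rewrite mulrS.
Qed.

Lemma ult_eq0 (z : T) : z = 0 <-> U (fun a => rep z a = 0).
Proof.
split=> [->|h]; first exact: rep0.
by apply/ult_eqE; exact: ae_eq_trans h (ae_eq_sym rep0).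
Qed.

Definition diag (q : K) : T := ucls (fun _ => q).

Lemma los_term (e : nat -> T) (t : vf_term K) :
  ae_eq (rep (eval_term diag e t)) (fun a => eval_term id (fun n => rep (e n) a) t).
Proof.
elim: t => /=.
- by move=> n; exact: ae_eq_refl.
- by move=> q; exact: rep_ucls.
- exact: rep0.
- exact: rep1.
- move=> t1 h1 t2 h2; apply: ae_eq_trans (repD _ _) _.
  exact: (ae_eq_app2 (fun u v => u + v)).
- move=> t1 h1 t2 h2; apply: ae_eq_trans (repB _ _) _.
  exact: (ae_eq_app2 (fun u v => u - v)).
- move=> t1 h1; apply: ae_eq_trans (repN _) _; exact: (ae_eq_app (fun u => - u)).
- move=> t1 h1 t2 h2; apply: ae_eq_trans (repM _ _) _.
  exact: (ae_eq_app2 (fun u v => u * v)).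
- move=> t1 h1; apply: ae_eq_trans (repV _) _; exact: (ae_eq_app (fun u => u^-1)).
Qed.

Variable OK : K -> Prop.
Hypothesis vK : valuation_ring OK.

Definition Oult (z : T) : Prop := U (fun a => OK (rep z a)).

Lemma Ov_ultra (u w : T) : Ov Oult u w <-> U (fun a => Ov OK (rep u a) (rep w a)).
Proof.
rewrite /Ov (ultra_or UU) !(ultra_and UU) -!ult_eq0 (ultra_not UU) -ult_eq0.
rewrite /Oult (ultra_congr OK (repdiv u w)).
by split; case=> h; [left|right|left|right].
Qed.

Lemma in_max_ultra (z : T) : in_max Oult z <-> U (fun a => in_max OK (rep z a)).
Proof.
rewrite /in_max /vlt (ultra_and UU) !Ov_ultra (ultra_not UU).
rewrite (ultra_congr2 (Ov OK) (ae_eq_refl (rep z)) rep1).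
by rewrite (ultra_congr2 (Ov OK) rep1 (ae_eq_refl (rep z))).
Qed.

Lemma los_qf (e : nat -> T) (phi : vf_qf K) :
  holds Oult diag e phi <-> U (fun a => holds OK id (fun n => rep (e n) a) phi).
Proof.
elim: phi => /=.
- move=> t1 t2; rewrite ult_eqE; split => h.
    exact: ae_eq_trans (ae_eq_sym (los_term e t1)) (ae_eq_trans h (los_term e t2)).
  exact: ae_eq_trans (los_term e t1) (ae_eq_trans h (ae_eq_sym (los_term e t2))).
- move=> t1 t2; rewrite Ov_ultra.
  exact: (ultra_congr2 (Ov OK) (los_term e t1) (los_term e t2)).
- by move=> f1 h1; rewrite (ultra_not UU) h1.
- by move=> f1 h1 f2 h2; rewrite (ultra_and UU) h1 h2.
- by move=> f1 h1 f2 h2; rewrite (ultra_or UU) h1 h2.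
Qed.

Lemma ex_closed_diag : ex_closed OK Oult diag.
Proof.
move=> phi [e /los_qf hU]; apply: NNPP => hno; apply: (ultraNF UU).
by apply: (ultraS UU _ hU) => a ha; apply: hno; exists (fun n => rep (e n) a).
Qed.

Lemma Oult_valuation_ring : valuation_ring Oult.
Proof.
rewrite /Oult; split.
- by apply/(ultra_congr OK rep0)/(ultraW UU) => _; exact: valring0.
- by apply/(ultra_congr OK rep1)/(ultraW UU) => _; exact: valring1.
- split.
    move=> z w hz hw; apply/(ultra_congr OK (repD z w)).
    by apply: (ultraS UU _ (ultraI UU hz hw)) => a [h1 h2]; apply: valringD.
  move=> z hz; apply/(ultra_congr OK (repN z)).
  by apply: (ultraS UU _ hz) => a h; apply: valringN.
- move=> z w hz hw; apply/(ultra_congr OK (repM z w)).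
  by apply: (ultraS UU _ (ultraI UU hz hw)) => a [h1 h2]; apply: valringM.
- move=> z /ult_neq0 nz; rewrite (ultra_congr OK (repV z)) -(ultra_or UU).
  by apply: (ultraS UU _ nz) => a /(valringV vK).
Qed.

Definition poly_at n (r : {poly T}) (b : I) : {poly K} := \poly_(i < n) rep r`_i b.

Lemma rep_horner n (r : {poly T}) (z : T) : (size r <= n)%N ->
  ae_eq (rep r.[z]) (fun b => (poly_at n r b).[rep z b]).
Proof.
move=> hr; rewrite (horner_coef_wide z hr).
apply: ae_eq_trans (rep_sum n (fun i => r`_i * z ^+ i)) _.
apply: ae_eq_trans (_ : ae_eq _ (fun b => \sum_(i < n) rep r`_i b * rep z b ^+ i)) _.
  apply: (ultraS UU _ (ultra_all UU (fun i _ => ae_eq_trans (repM r`_i (z ^+ i))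
    (ae_eq_app2 (fun u v => u * v) (ae_eq_refl _) (rep_exp z i))))).
  by move=> b h; apply: eq_bigr => i _; exact: h.
apply: (ultraW UU) => b; rewrite (horner_coef_wide _ (size_poly _ _)).
by apply: eq_bigr => i _; rewrite coef_poly ltn_ord.
Qed.

Lemma deriv_poly_at (p : {poly T}) :
  U (fun b => (poly_at (size p) p b)^`() = poly_at (size p) p^`() b).
Proof.
set n := size p.
have hcoef i : (i < n)%N ->
    U (fun b => ((poly_at n p b)^`())`_i = (poly_at n p^`() b)`_i).
  move=> hi; apply: (ultraS UU _ (ultraI UU (rep_natmul p`_i.+1 i.+1) rep0)).
  move=> b [h1 h2]; rewrite coef_deriv !coef_poly hi -subn1 ltn_subRL add1n.
  by case: ifP => _; [rewrite h1|rewrite h2 mul0rn].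
apply: (ultraS UU _ (ultra_all UU hcoef)) => b H; apply/polyP => i.
have [hi|hi] := ltnP i n; first exact: H.
rewrite coef_deriv !coef_poly.
by case: ifP => h3; case: ifP => h4; rewrite ?mul0rn //; move: hi h3 h4; clear; lia.
Qed.

Lemma poly_at_monic (p : {poly T}) : p \is monic ->
  U (fun b => poly_at (size p) p b \is monic).
Proof.
move=> mp; have n_gt0 : (0 < size p)%N by rewrite size_poly_gt0 monic_neq0.
have hlead : U (fun b => rep p`_(size p).-1 b = 1).
  by rewrite -lead_coefE (monicP mp); exact: rep1.
apply: (ultraS UU _ hlead) => b hb; rewrite monicE /lead_coef.
rewrite size_poly_eq /poly_at ?coef_poly ?prednK // ?ltnSn ?hb ?oner_neq0 //.
by rewrite leqnn.
Qed.

Lemma ultra_choice (P : I -> K -> Prop) :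
  U (fun b => exists c, P b c) -> exists g : I -> K, U (fun b => P b (g b)).
Proof.
move=> h; exists (fun b => epsilon (inhabits 0) (P b)).
by apply: (ultraS UU _ h) => b; exact: epsilon_spec.
Qed.

Hypothesis henK : henselian OK.

Lemma Oult_henselian : henselian Oult.
Proof.
move=> p z mp hcoef hz hmax hder; set n := size p.
have hco : U (fun b => forall i, OK (poly_at n p b)`_i).
  apply: (ultraS UU _ (@ultra_all _ _ UU n _ (fun i _ => hcoef i))) => b h i.
  by rewrite coef_poly; case: ifP => hi; [exact: (h i hi)|exact: valring0].
have hm1 : U (fun b => in_max OK (poly_at n p b).[rep z b]).
  by apply/(ultra_congr (in_max OK) (rep_horner z (leqnn n)))/in_max_ultra.
have hm2 : U (fun b => ~ in_max OK (poly_at n p b)^`().[rep z b]).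
  have h1 : U (fun b => ~ in_max OK (rep (p^`()).[z] b)).
    by apply/(ultra_not UU); rewrite -in_max_ultra.
  have h2 := rep_horner z (ltnW (lt_size_deriv (monic_neq0 mp))).
  apply: (ultraS UU _ (ultraI UU (ultraI UU h1 h2) (deriv_poly_at p))).
  by move=> b [[H1 H2] H3]; rewrite H3 -H2.
have hroot : U (fun b => exists c,
    [/\ OK c, (poly_at n p b).[c] = 0 & in_max OK (c - rep z b)]).
  have := ultraI UU (ultraI UU (ultraI UU (ultraI UU (poly_at_monic mp) hco) hz) hm1) hm2.
  by apply: (ultraS UU) => b [[[[h1 h2] h3] h4] h5]; exact: henK h1 h2 h3 h4 h5.
have [g hg] := ultra_choice hroot; exists (ucls g); have hr := rep_ucls g.
split.
- by rewrite /Oult (ultra_congr OK hr); apply: (ultraS UU _ hg) => b [].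
- apply/ult_eq0; have h1 := rep_horner (ucls g) (leqnn n).
  apply: (ultraS UU _ (ultraI UU (ultraI UU h1 hr) hg)) => b [[H1 H2] [_ H3 _]].
  by rewrite H1 H2.
- apply/in_max_ultra/(ultra_congr (in_max OK) (repB _ _)).
  by apply: (ultraS UU _ (ultraI UU hr hg)) => b [H1 [_ _ H3]]; rewrite H1.
Qed.

End Ultrapower.

Section Embedding.
Variables (K L : fieldType) (OK : K -> Prop) (OL : L -> Prop).
Variables (iota : {rmorphism K -> L}) (x : L).
Variables (d : Order.disp_t) (I : orderType d) (s : I -> K).
Variables (U : (I -> Prop) -> Prop) (UU : ultrafilter U).
Hypotheses (vL : valuation_ring OL) (ve : valued_ext OK OL iota).
Hypotheses (gen : generated_by iota x) (no_max : forall a : I, exists b, (a < b)%O).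
Hypothesis s_transcendental : transcendental_type OK s.
Hypothesis x_limit : exists a1, forall a b, (a1 <= a)%O -> (a < b)%O ->
  vlt OL (x - iota (s a)) (x - iota (s b)).
Hypothesis ultimately_ultra : forall P, ultimately P -> U P.

Local Notation T := (ultrapower K UU).

Definition xeval (f : {poly K}) := (map_poly iota f).[x].

Lemma xevalB f g : xeval (f - g) = xeval f - xeval g.
Proof. by rewrite /xeval rmorphB hornerD hornerN. Qed.
Lemma xevalM f g : xeval (f * g) = xeval f * xeval g.
Proof. by rewrite /xeval rmorphM hornerM. Qed.
Lemma xevalC c : xeval c%:P = iota c.
Proof. by rewrite /xeval map_polyC hornerC. Qed.
Lemma xeval1 : xeval 1 = 1.
Proof. by rewrite /xeval rmorph1 hornerC. Qed.

Lemma xeval_value f : ultimately (fun a => veq OL (xeval f) (iota f.[s a])).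
Proof.
have tt g : exists a0, forall a, (a0 <= a)%O ->
    veq OL (map_poly iota g).[iota (s a)] (map_poly iota g).[iota (s a0)].
  have [a0 h] := s_transcendental g; exists a0 => a ha.
  by rewrite !horner_map; apply/(veq_map ve); apply: h.
have := kaplansky_value vL no_max tt x_limit f.
by apply: ultimately_mono => a; rewrite horner_map.
Qed.

Lemma xeval_eq0 f : xeval f = 0 -> U (fun a => f.[s a] = 0).
Proof.
move=> e; apply: ultimately_ultra; apply: ultimately_mono (xeval_value f) => a.
by rewrite e => /veq_eq0 /(_ erefl) /eqP; rewrite fmorph_eq0 => /eqP.
Qed.

Lemma xeval_neq0 f : xeval f != 0 -> ultimately (fun a => f.[s a] != 0).
Proof.
move=> nf; apply: ultimately_mono (xeval_value f) => a /veq_sym h.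
by apply: contra_neq nf => e; apply: (veq_eq0 h); rewrite e rmorph0.
Qed.

Lemma xfrac_ex (y : L) : exists pq : {poly K} * {poly K},
  xeval pq.2 != 0 /\ y = xeval pq.1 / xeval pq.2.
Proof. by have [f [g [h1 h2]]] := gen y; exists (f, g). Qed.

Definition xfrac (y : L) : {poly K} * {poly K} := sval (cid (xfrac_ex y)).

Lemma xfracP (y : L) : xeval (xfrac y).2 != 0 /\ y = xeval (xfrac y).1 / xeval (xfrac y).2.
Proof. exact: svalP (cid (xfrac_ex y)). Qed.

(* [x] is sent to the class of the sequence [s]. *)
Definition embed (y : L) : T := ucls UU (fun a => (xfrac y).1.[s a] / (xfrac y).2.[s a]).

Lemma rep_embed (y : L) f g : xeval g != 0 -> y = xeval f / xeval g ->
  ae_eq U (rep (embed y)) (fun a => f.[s a] / g.[s a]).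
Proof.
move=> ng ey; have [ng0 ey0] := xfracP y.
set f0 := (xfrac y).1 in ey0 *; set g0 := (xfrac y).2 in ng0 ey0 *.
apply: (ae_eq_trans UU) (rep_ucls UU _) _; rewrite -/f0 -/g0.
have e : xeval (f0 * g - f * g0) = 0.
  rewrite xevalB !xevalM; apply/eqP; rewrite subr_eq0; apply/eqP.
  have : xeval f0 / xeval g0 = xeval f / xeval g by rewrite -ey -ey0.
  by move/eqP; rewrite eqr_div // => /eqP.
have ng0' := ultimately_ultra (xeval_neq0 ng0); have ng' := ultimately_ultra (xeval_neq0 ng).
apply: (ultraS UU _ (ultraI UU (ultraI UU (xeval_eq0 e) ng0') ng')) => a [[h1 h2] h3].
apply/eqP; rewrite eqr_div //; apply/eqP; apply/eqP; rewrite -subr_eq0.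
by move: h1; rewrite hornerD hornerN !hornerM => ->.
Qed.

Lemma embed_frac (y : L) : U (fun a => (xfrac y).2.[s a] != 0) /\
  ae_eq U (rep (embed y)) (fun a => (xfrac y).1.[s a] / (xfrac y).2.[s a]).
Proof.
have [ng ey] := xfracP y.
by split; [exact: ultimately_ultra (xeval_neq0 ng)|exact: rep_embed ng ey].
Qed.

Lemma embed_is_zmod_morphism : zmod_morphism embed.
Proof.
move=> y1 y2; have [n1 e1] := xfracP y1; have [n2 e2] := xfracP y2.
set f1 := (xfrac y1).1 in n1 e1 *; set g1 := (xfrac y1).2 in n1 e1 *.
set f2 := (xfrac y2).1 in n2 e2 *; set g2 := (xfrac y2).2 in n2 e2 *.
have n12 : xeval (g1 * g2) != 0 by rewrite xevalM mulf_neq0.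
have e12 : y1 - y2 = xeval (f1 * g2 - f2 * g1) / xeval (g1 * g2).
  by rewrite e1 e2 xevalB !xevalM; field; apply/andP.
have [[z1 r1] [z2 r2]] := (embed_frac y1, embed_frac y2).
apply/(ult_eqE UU); apply: (ae_eq_trans UU (rep_embed n12 e12)).
apply: (ae_eq_sym UU); apply: (ae_eq_trans UU (repB _ _)).
apply: (ultraS UU _ (ultraI UU (ultraI UU (ultraI UU r1 r2) z1) z2)) => a [[[h1 h2] h3] h4].
by rewrite h1 h2 hornerD hornerN !hornerM; field; apply/andP.
Qed.

Lemma embed_is_monoid_morphism : monoid_morphism embed.
Proof.
split.
  have n1 : xeval 1 != 0 by rewrite xeval1 oner_neq0.
  have e1 : (1 : L) = xeval 1 / xeval 1 by rewrite divff.
  apply/(ult_eqE UU); apply: (ae_eq_trans UU (rep_embed n1 e1)).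
  apply: (ae_eq_sym UU); apply: (ae_eq_trans UU (rep1 K UU)).
  by apply: (ultraW UU) => a; rewrite hornerC divr1.
move=> y1 y2; have [n1 e1] := xfracP y1; have [n2 e2] := xfracP y2.
set f1 := (xfrac y1).1 in n1 e1 *; set g1 := (xfrac y1).2 in n1 e1 *.
set f2 := (xfrac y2).1 in n2 e2 *; set g2 := (xfrac y2).2 in n2 e2 *.
have n12 : xeval (g1 * g2) != 0 by rewrite xevalM mulf_neq0.
have e12 : y1 * y2 = xeval (f1 * f2) / xeval (g1 * g2).
  by rewrite e1 e2 !xevalM; field; apply/andP.
have [[z1 r1] [z2 r2]] := (embed_frac y1, embed_frac y2).
apply/(ult_eqE UU); apply: (ae_eq_trans UU (rep_embed n12 e12)).
apply: (ae_eq_sym UU); apply: (ae_eq_trans UU (repM _ _)).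
apply: (ultraS UU _ (ultraI UU (ultraI UU (ultraI UU r1 r2) z1) z2)) => a [[[h1 h2] h3] h4].
by rewrite h1 h2 !hornerM; field; apply/andP.
Qed.

HB.instance Definition _ := GRing.isZmodMorphism.Build L T embed embed_is_zmod_morphism.
HB.instance Definition _ := GRing.isMonoidMorphism.Build L T embed embed_is_monoid_morphism.

Lemma embed_iota q : embed (iota q) = diag UU q.
Proof.
have n1 : xeval 1 != 0 by rewrite xeval1 oner_neq0.
have e1 : iota q = xeval q%:P / xeval 1 by rewrite xevalC xeval1 divr1.
apply/(ult_eqE UU); apply: (ae_eq_trans UU (rep_embed n1 e1)).
apply: (ae_eq_sym UU); apply: (ae_eq_trans UU (rep_ucls UU _)).
by apply: (ultraW UU) => a; rewrite !hornerC divr1.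
Qed.

Lemma embed_valued_ext : valued_ext OL (@Oult K I U UU OK) embed.
Proof.
move=> y; have [ng ey] := xfracP y; have [_ r] := embed_frac y.
set f := (xfrac y).1 in ey r; set g := (xfrac y).2 in ng ey r.
have key : ultimately (fun a => OL y <-> OK (f.[s a] / g.[s a])).
  apply: ultimately_mono (ultimately_and (ultimately_and (xeval_value f) (xeval_value g))
    (xeval_neq0 ng)) => a [[hf hg] hn].
  have ng' : iota g.[s a] != 0 by rewrite fmorph_eq0.
  rewrite ey -(OvE _ _ ng) -(OvE _ _ hn) (Ov_map ve).
  split=> h; first exact: (Ov_veq vL hf hg h).
  exact: (Ov_veq vL (veq_sym hf) (veq_sym hg) h).
rewrite /Oult (ultra_congr UU OK r); split=> h.
  by apply: ultimately_ultra; apply: ultimately_mono key => a [+ _]; apply.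
apply: NNPP => hn; move: h; apply/(ultra_not UU); apply: ultimately_ultra.
by apply: ultimately_mono key => a [h1 h2] /h2.
Qed.

Lemma ultrapower_embedding : exists k : {rmorphism L -> T},
  valued_ext OL (@Oult K I U UU OK) k /\ forall q, k (iota q) = diag UU q.
Proof.
exists (GRing.RMorphism.clone _ _ embed _).
by split; [exact: embed_valued_ext|exact: embed_iota].
Qed.

End Embedding.

Section FormulasUnderEmbeddings.
Variables (C : Type) (M N : fieldType) (OM : M -> Prop) (ON : N -> Prop).
Variables (h : {rmorphism M -> N}) (c : C -> M) (e : nat -> M).
Hypothesis ve : valued_ext OM ON h.

Lemma eval_term_morph t :
  h (eval_term c e t) = eval_term (fun q => h (c q)) (fun n => h (e n)) t.
Proof.
elim: t => //=.
- exact: rmorph0.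
- exact: rmorph1.
- by move=> t1 h1 t2 h2; rewrite rmorphD h1 h2.
- by move=> t1 h1 t2 h2; rewrite rmorphB h1 h2.
- by move=> t1 h1; rewrite rmorphN h1.
- by move=> t1 h1 t2 h2; rewrite rmorphM h1 h2.
- by move=> t1 h1; rewrite fmorphV h1.
Qed.

Lemma holds_morph phi :
  holds OM c e phi <-> holds ON (fun q => h (c q)) (fun n => h (e n)) phi.
Proof.
elim: phi => /= [t1 t2|t1 t2|f1|f1 h1 f2 h2|f1 h1 f2 h2]; rewrite -?eval_term_morph.
- by split=> [->|/fmorph_inj].
- exact: Ov_map.
- by move=> h1; rewrite h1.
- by rewrite h1 h2.
- by rewrite h1 h2.
Qed.

End FormulasUnderEmbeddings.

Lemma ex_closed_morph (K M N : fieldType) (OK : K -> Prop) (OM : M -> Prop)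
    (ON : N -> Prop) (c : K -> M) (h : {rmorphism M -> N}) :
  valued_ext OM ON h -> ex_closed OK ON (h \o c) -> ex_closed OK OM c.
Proof. by move=> ve hc phi [e he]; apply: hc; exists (h \o e); apply/(holds_morph _ _ ve). Qed.

Lemma ultrafilter_tails (d : Order.disp_t) (I : orderType d) : inhabited I ->
  exists2 U, ultrafilter U & forall P : I -> Prop, ultimately P -> U P.
Proof.
case=> a0; apply: ultrafilter_extend.
- by exists a0.
- exact: ultimately_and.
- exact: ultimately_mono.
- by case=> a1; apply; exact: lexx.
Qed.

Theorem corollary3p8
  (K : fieldType) (OK : K -> Prop)
  (L : fieldType) (OL : L -> Prop) (iota : {rmorphism K -> L}) (x : L)
  (H : fieldType) (OH : H -> Prop) (j : {rmorphism L -> H})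
  (d : Order.disp_t) (I : orderType d) (s : I -> K) :
  valuation_ring OK -> henselian OK ->
  valuation_ring OL -> valued_ext OK OL iota ->
  generated_by iota x -> immediate OK OL iota ->
  limit_index I -> pseudo_cauchy OK s -> transcendental_type OK s ->
  pseudo_limit OL iota s x ->
  henselization OL OH j ->
  ex_closed OK OH (fun a => j (iota a)).
Proof.
move=> vK henK vL ve gen _ [_ inhI no_max] _ tt [x_limit _] [_ _ _ univ].
have [U UU tails] := ultrafilter_tails inhI.
have [k [vek k_iota]] := ultrapower_embedding UU vL ve gen no_max tt x_limit tails.
have [h [veh hj _]] := univ _ _ k (Oult_valuation_ring UU vK)
  (Oult_henselian vK henK) vek.
apply: (ex_closed_morph veh).
have -> : h \o (fun a => j (iota a)) = diag UU by apply: funext => q; rewrite /= hj k_iota.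
exact: ex_closed_diag.
Qed.
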